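(* (Non-overlap scenario.) Let $\mathbf p^*\in\mathbf\Omega$ be a limiting point of the distributed projected gradient iteration with $\mathbf p^*\in\mathrm{int}\,\mathbf\Omega$ (so that $\frac{\partial J}{\partial p_i}(\mathbf p^* )=0$ for all $i$). If at $\mathbf p^*$ no two satellites have overlapping coverage regions, then $\mathbf p^*$ is a local minimum of $J$.
   Context: Coverage model. Fix an integer $n\ge 3$ and constants $r_s>0$, $\omega>0$, $T_s=2\pi/\omega$, $0<p^{\mathrm m}<r_s$. Satellites are indexed by $\mathcal N=\{1,\dots,n\}$, indices taken cyclically modulo $n$. Satellite $i$ has an initial angle $\phi_i^0$ (with $0=\phi_1^0<\phi_2^0<\dots<\phi_n^0<2\pi$), a coverage angle $\alpha_i\in(0,\pi)$, a maximum coverage intensity $\psi_i^{\mathrm m}>0$, and slope $k_i=\psi_i^{\mathrm m}/\alpha_i$. The strategy (relative position) of satellite $i$ is $p_i=(p_{ix},p_{iy})\in\Omega_i:=\{p\in\mathbb R^2:\ \|p\|_2\le p^{\mathrm m},\ (p_x+r_s)^2+p_y^2=r_s^2\}$, a closed circular arc; $\mathrm{bd}\,\Omega_i$ denotes its two endpoints and $\mathrm{int}\,\Omega_i$ the rest of the arc. Write $\mathbf p=(p_1,\dots,p_n)\in\mathbf\Omega=\prod_i\Omega_i$. Deviation angle: $\Delta\phi_i(p_i)=\operatorname{sgn}(p_{iy})\arccos\big((p_{ix}+r_s)/\sqrt{(p_{ix}+r_s)^2+p_{iy}^2}\big)$. Configuration angle at time $\tau$: $\phi_i(p_i,\tau)=\phi_i^0+\Delta\phi_i(p_i)+\omega\tau$.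 Coverage regions (angles in $\theta$, understood modulo $2\pi$): $C_i^+=(\phi_i,\phi_i+\alpha_i)$, $C_i^-=(\phi_i-\alpha_i,\phi_i)$, $C_i=C_i^+\cup C_i^-\cup\{\phi_i\}$. Local coverage intensity: $\psi_i(p_i,\theta,\tau)=\psi_i^{\mathrm m}-k_i(\theta-\phi_i)$ for $\theta\in C_i^+\cup\{\phi_i\}$, $\psi_i^{\mathrm m}+k_i(\theta-\phi_i)$ for $\theta\in C_i^-$, and $0$ otherwise (with $\theta$ shifted by a multiple of $2\pi$ so that $\theta-\phi_i\in(-\pi,\pi]$). Demand: $\mu:\mathbb R\to[0,\infty)$ continuous and $2\pi$-periodic. Global intensity $\rho(\mathbf p,\theta,\tau)=\sum_{i=1}^n\psi_i(p_i,\theta,\tau)$. Potential (accumulated average coverage cost): $J(\mathbf p)=\frac{1}{2T_s}\int_0^{T_s}\int_{\omega\tau}^{\omega\tau+2\pi}(\rho(\mathbf p,\theta,\tau)-\mu(\theta))^2\,\mathrm d\theta\,\mathrm d\tau$. The distributed projected gradient iteration is $p_i^{(k+1)}=\operatorname{proj}_{\Omega_i}\big(p_i^{(k)}-s^{(k)}\frac{\partial J}{\partial p_i}(\mathbf p^{(k)})\big)$ for all $i$. *)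

From Stdlib Require Import Reals Lra List.
From Coquelicot Require Import Coquelicot.
Open Scope R_scope.

(* A strategy p_i = (p_ix, p_iy) is a point of R^2; a profile is a function
   nat -> R*R of which only the indices 0..n-1 matter (satellite i+1 of the
   paper is index i here). *)

Definition sgn (y : R) : R :=
  if Rlt_dec 0 y then 1 else if Rlt_dec y 0 then -1 else 0.

Definition norm2 (p : R * R) : R := sqrt (fst p ^ 2 + snd p ^ 2).

(* Omega_i (the same set for every i) *)
Definition in_Omega (rs pm : R) (p : R * R) : Prop :=
  norm2 p <= pm /\ (fst p + rs) ^ 2 + snd p ^ 2 = rs ^ 2.
(* bd Omega_i : the two endpoints of the arc, i.e. the points with norm = pm *)
Definition in_bd_Omega (rs pm : R) (p : R * R) : Prop :=
  in_Omega rs pm p /\ norm2 p = pm.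
(* int Omega_i : the rest of the arc *)
Definition in_int_Omega (rs pm : R) (p : R * R) : Prop :=
  in_Omega rs pm p /\ ~ in_bd_Omega rs pm p.

Definition dphi (rs : R) (p : R * R) : R :=
  sgn (snd p) * acos ((fst p + rs) / sqrt ((fst p + rs) ^ 2 + snd p ^ 2)).

Definition phi (rs om : R) (phi0 : R) (p : R * R) (tau : R) : R :=
  phi0 + dphi rs p + om * tau.

(* representative of x modulo 2*PI in (-PI, PI] *)
Definition wrap (x : R) : R :=
  x + 2 * PI * IZR (Int_part ((PI - x) / (2 * PI))).

Definition in_Cplus (a ph th : R) : Prop := 0 < wrap (th - ph) < a.
Definition in_Cminus (a ph th : R) : Prop := - a < wrap (th - ph) < 0.
Definition in_C (a ph th : R) : Prop :=
  in_Cplus a ph th \/ in_Cminus a ph th \/ wrap (th - ph) = 0.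

(* local coverage intensity, with k = psim / a *)
Definition psi_loc (a psim ph th : R) : R :=
  let d := wrap (th - ph) in
  if Rle_dec 0 d then (if Rlt_dec d a then psim - (psim / a) * d else 0)
  else (if Rlt_dec (- a) d then psim + (psim / a) * d else 0).

Fixpoint sum_upto (n : nat) (f : nat -> R) : R :=
  match n with O => 0 | S m => sum_upto m f + f m end.

Definition rho (n : nat) (rs om : R) (phi0 alpha psim : nat -> R)
  (p : nat -> R * R) (th tau : R) : R :=
  sum_upto n (fun i => psi_loc (alpha i) (psim i)
                         (phi rs om (phi0 i) (p i) tau) th).

Definition Jpot (n : nat) (rs om : R) (phi0 alpha psim : nat -> R)
  (mu : R -> R) (p : nat -> R * R) : R :=
  let Ts := 2 * PI / om in
  / (2 * Ts) *
  RInt (fun tau =>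
          RInt (fun th => (rho n rs om phi0 alpha psim p th tau - mu th) ^ 2)
               (om * tau) (om * tau + 2 * PI)) 0 Ts.

Definition upd (p : nat -> R * R) (i : nat) (v : R * R) : nat -> R * R :=
  fun j => if Nat.eqb j i then v else p j.

Definition dJ_x (F : (nat -> R * R) -> R) (p : nat -> R * R) (i : nat) : R :=
  Derive (fun t => F (upd p i (t, snd (p i)))) (fst (p i)).
Definition dJ_y (F : (nat -> R * R) -> R) (p : nat -> R * R) (i : nat) : R :=
  Derive (fun t => F (upd p i (fst (p i), t))) (snd (p i)).

Definition is_proj_Omega (rs pm : R) (z w : R * R) : Prop :=
  in_Omega rs pm w /\
  forall v, in_Omega rs pm v ->
    norm2 (fst z - fst w, snd z - snd w) <= norm2 (fst z - fst v, snd z - snd v).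

(* (rho - mu)^2 = (sum_i psi_i^2 - 2 mu rho + mu^2) + sum_(i <> j) psi_i psi_j, and the
   last sum is nonnegative.  Integrated, the first part splits into the satellite terms
   int psi_i^2 - 2 int mu psi_i and int mu^2; averaged over a full rotation of the
   constellation, int mu psi_i no longer depends on the position of satellite i.  So J is
   bounded below by a constant independent of the strategies, attained when the cross
   terms vanish, i.e. when no two coverage regions overlap.  Hence p* is even a global
   minimum. *)

From Stdlib Require Import Reals Lra Lia Psatz ZArith.
From Coquelicot Require Import Coquelicot.
Open Scope R_scope.

(** * Continuity and integration *)

Lemma continuous_Rplus (f g : R -> R) x :
  continuous f x -> continuous g x -> continuous (fun y => f y + g y) x.
Proof. exact (continuous_plus f g x). Qed.

Lemma continuous_Rminus (f g : R -> R) x :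
  continuous f x -> continuous g x -> continuous (fun y => f y - g y) x.
Proof. exact (continuous_minus f g x). Qed.

Lemma continuous_Rmult (f g : R -> R) x :
  continuous f x -> continuous g x -> continuous (fun y => f y * g y) x.
Proof. exact (continuous_mult f g x). Qed.

Lemma continuous_pow (f : R -> R) k x : continuous f x -> continuous (fun y => f y ^ k) x.
Proof.
  intro Hf. induction k as [|k IH]; [apply continuous_const|].
  now apply continuous_Rmult.
Qed.

Lemma continuous_comp_everywhere (g f : R -> R) x :
  continuous f x -> (forall y, continuous g y) -> continuous (fun y => g (f y)) x.
Proof. intros Hf Hg. now apply continuous_comp. Qed.

(* [apply continuous_Rplus] and [apply continuous_Rmult] may leave eta-reduced goals
   such as [continuous (Rmult a) x]. *)
Ltac continuity :=
  repeat match goal with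
  | |- continuous (fun _ => ?c) _ => apply continuous_const
  | |- continuous (fun y => y) _ => apply continuous_id
  | |- continuous (fun _ => _ - _) _ => apply continuous_Rminus
  | |- continuous (fun _ => _ + _) _ => apply continuous_Rplus
  | |- continuous (fun _ => _ * _) _ => apply continuous_Rmult
  | |- continuous (fun _ => _ ^ _) _ => apply continuous_pow
  | |- continuous (Rmult ?a) _ => apply (continuous_Rmult (fun _ => a) (fun y => y))
  | |- continuous (Rplus ?a) _ => apply (continuous_Rplus (fun _ => a) (fun y => y))
  | H : forall y, continuous ?f y |- continuous ?f _ => apply H
  | H : forall y, continuous ?g y |- continuous (fun _ => ?g _) _ =>
      apply (continuous_comp_everywhere g); [|exact H]
  end.

Lemma lipschitz_continuous (f : R -> R) x0 L : 0 <= L ->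
  (forall x, Rabs (f x - f x0) <= L * Rabs (x - x0)) -> continuous f x0.
Proof.
  intros HL Hf. apply continuity_pt_filterlim.
  intros eps Heps. exists (eps / (L + 1)). split; [apply Rdiv_lt_0_compat; lra|].
  intros x [_ Hx]. simpl in *. unfold R_dist in *.
  eapply Rle_lt_trans; [apply Hf|].
  assert (L * Rabs (x - x0) <= L * (eps / (L + 1))) by (apply Rmult_le_compat_l; lra).
  assert (L * (eps / (L + 1)) < eps).
  { apply (Rmult_lt_reg_r (L + 1)); [lra|]. field_simplify; lra. }
  lra.
Qed.

Lemma continuous_bounded_on (f : R -> R) a b : a <= b -> (forall x, continuous f x) ->
  exists M, forall x, a <= x <= b -> Rabs (f x) <= M.
Proof.
  intros Hab Hf. destruct (continuity_ab_maj (fun x => Rabs (f x)) a b Hab) as [xm [Hxm _]].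
  - intros x _. apply continuity_pt_filterlim.
    apply (continuous_comp_everywhere Rabs f); [apply Hf|].
    intro y. apply continuity_pt_filterlim, Rcontinuity_abs.
  - exists (Rabs (f xm)). exact Hxm.
Qed.

Lemma ex_RInt_continuous_everywhere (f : R -> R) a b :
  (forall x, continuous f x) -> ex_RInt f a b.
Proof. intro Hf. apply (ex_RInt_continuous (V := R_CompleteNormedModule)). auto. Qed.

Lemma RInt_plus_continuous (f g : R -> R) a b :
  (forall x, continuous f x) -> (forall x, continuous g x) ->
  RInt (fun x => f x + g x) a b = RInt f a b + RInt g a b.
Proof.
  intros Hf Hg. apply (RInt_plus (V := R_CompleteNormedModule));
    now apply ex_RInt_continuous_everywhere.
Qed.

Lemma RInt_minus_scal_continuous (f g : R -> R) k a b :
  (forall x, continuous f x) -> (forall x, continuous g x) ->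
  RInt (fun x => f x - k * g x) a b = RInt f a b - k * RInt g a b.
Proof.
  intros Hf Hg. change (k * RInt g a b) with (scal k (RInt g a b)).
  rewrite <- (RInt_scal (V := R_CompleteNormedModule) g a b k)
    by now apply ex_RInt_continuous_everywhere.
  apply (RInt_minus (V := R_CompleteNormedModule) f (fun x => scal k (g x)));
    apply ex_RInt_continuous_everywhere; [exact Hf|].
  intro x. apply (continuous_scal_r (V := R_NormedModule) k g x (Hg x)).
Qed.

Section Periodic.

Variables (P : R -> R) (T : R).
Hypothesis P_continuous : forall x, continuous P x.
Hypothesis P_periodic : forall x, P (x + T) = P x.

Let P_integrable a b : ex_RInt P a b.
Proof. now apply ex_RInt_continuous_everywhere. Qed.

Lemma RInt_periodic a : RInt P a (a + T) = RInt P 0 T.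
Proof.
  assert (Htail : RInt P T (a + T) = RInt P 0 a).
  { pose proof (RInt_comp_lin (V := R_CompleteNormedModule) P 1 T 0 a) as E.
    rewrite Rmult_0_r, Rplus_0_l, Rmult_1_l in E.
    rewrite <- E by apply P_integrable. apply RInt_ext. intros x _.
    change scal with Rmult. rewrite !Rmult_1_l, P_periodic. reflexivity. }
  pose proof (RInt_Chasles P a 0 (a + T) (P_integrable _ _) (P_integrable _ _)) as C1.
  pose proof (RInt_Chasles P 0 T (a + T) (P_integrable _ _) (P_integrable _ _)) as C2.
  pose proof (opp_RInt_swap P 0 a (P_integrable _ _)) as C3.
  change plus with Rplus in C1, C2. change opp with Ropp in C3.
  rewrite Htail in C2. lra.
Qed.

Lemma RInt_periodic_shift s : RInt (fun x => P (x + s)) 0 T = RInt P 0 T.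
Proof.
  pose proof (RInt_comp_lin (V := R_CompleteNormedModule) P 1 s 0 T) as E.
  rewrite Rmult_0_r, Rplus_0_l, Rmult_1_l, (Rplus_comm T) in E.
  rewrite <- (RInt_periodic s), <- E by apply P_integrable.
  apply RInt_ext. intros x _. change scal with Rmult. now rewrite !Rmult_1_l.
Qed.

End Periodic.

Lemma RInt_comp_scale (h : R -> R) T om : 0 < om -> (forall x, continuous h x) ->
  RInt (fun tau => h (om * tau)) 0 (T / om) = / om * RInt h 0 T.
Proof.
  intros Hom Hh.
  pose proof (RInt_comp_lin (V := R_CompleteNormedModule) h om 0 0 (T / om)) as E.
  replace (om * 0 + 0) with 0 in E by ring.
  replace (om * (T / om) + 0) with T in E by (field; lra).
  rewrite <- E by now apply ex_RInt_continuous_everywhere.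
  rewrite (RInt_scal (V := R_CompleteNormedModule)).
  - change scal with Rmult. rewrite <- Rmult_assoc, Rinv_l, Rmult_1_l by lra.
    apply RInt_ext. intros x _. now rewrite Rplus_0_r.
  - apply ex_RInt_continuous_everywhere. intro x.
    apply (continuous_comp_everywhere h); [continuity | exact Hh].
Qed.

Lemma continuous_RInt_param (H : R -> R -> R) a b L t0 : a <= b -> 0 <= L ->
  (forall t, ex_RInt (H t) a b) ->
  (forall t u, a <= u <= b -> Rabs (H t u - H t0 u) <= L * Rabs (t - t0)) ->
  continuous (fun t => RInt (H t) a b) t0.
Proof.
  intros Hab HL Hex Hlip. apply (lipschitz_continuous _ t0 ((b - a) * L)).
  - apply Rmult_le_pos; lra.
  - intro t. pose proof (RInt_minus (H t) (H t0) a b (Hex t) (Hex t0)) as E.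
    change minus with Rminus in E. rewrite <- E, Rmult_assoc.
    apply abs_RInt_le_const; auto.
    now apply (ex_RInt_minus (V := R_NormedModule)).
Qed.

(** * Finite sums *)

Lemma sum_upto_ext n f g : (forall i, (i < n)%nat -> f i = g i) -> sum_upto n f = sum_upto n g.
Proof.
  induction n as [|n IH]; intro Hfg; simpl; [reflexivity|].
  rewrite IH by (intros; apply Hfg; lia). rewrite Hfg by lia. reflexivity.
Qed.

Lemma sum_upto_le n f g : (forall i, (i < n)%nat -> f i <= g i) -> sum_upto n f <= sum_upto n g.
Proof.
  induction n as [|n IH]; intro Hfg; simpl; [lra|].
  pose proof (Hfg n ltac:(lia)). pose proof (IH (fun i Hi => Hfg i ltac:(lia))). lra.
Qed.

Lemma sum_upto_zero n : sum_upto n (fun _ => 0) = 0.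
Proof. induction n as [|n IH]; simpl; [reflexivity|]. rewrite IH. ring. Qed.

Lemma sum_upto_ge0 n f : (forall i, (i < n)%nat -> 0 <= f i) -> 0 <= sum_upto n f.
Proof. intro Hf. rewrite <- (sum_upto_zero n). now apply sum_upto_le. Qed.

Lemma sum_upto_minus n f g : sum_upto n (fun i => f i - g i) = sum_upto n f - sum_upto n g.
Proof. induction n as [|n IH]; simpl; [ring|]. rewrite IH. ring. Qed.

Lemma sum_upto_mult_l n k f : sum_upto n (fun i => k * f i) = k * sum_upto n f.
Proof. induction n as [|n IH]; simpl; [ring|]. rewrite IH. ring. Qed.

Lemma sum_upto_mult_r n f k : sum_upto n (fun i => f i * k) = sum_upto n f * k.
Proof. induction n as [|n IH]; simpl; [ring|]. rewrite IH. ring. Qed.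

Lemma Rabs_sum_upto n f : Rabs (sum_upto n f) <= sum_upto n (fun i => Rabs (f i)).
Proof.
  induction n as [|n IH]; simpl; [rewrite Rabs_R0; lra|].
  eapply Rle_trans; [apply Rabs_triang|]. lra.
Qed.

Lemma sum_upto_sqr_le n f : (forall i, (i < n)%nat -> 0 <= f i) ->
  sum_upto n (fun i => f i ^ 2) <= sum_upto n f ^ 2.
Proof.
  induction n as [|n IH]; intro Hf; simpl; [lra|].
  pose proof (IH (fun i Hi => Hf i ltac:(lia))).
  pose proof (sum_upto_ge0 n f (fun i Hi => Hf i ltac:(lia))). pose proof (Hf n ltac:(lia)).
  simpl in *. nra.
Qed.

Lemma sum_upto_sqr_orthogonal n f :
  (forall i j, (i < n)%nat -> (j < n)%nat -> i <> j -> f i * f j = 0) ->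
  sum_upto n (fun i => f i ^ 2) = sum_upto n f ^ 2.
Proof.
  induction n as [|n IH]; intro Hf; cbn [sum_upto]; [ring|].
  rewrite IH by (intros; apply Hf; lia).
  assert (Hcross : sum_upto n f * f n = 0).
  { rewrite <- sum_upto_mult_r, <- (sum_upto_zero n).
    apply sum_upto_ext. intros i Hi. apply Hf; lia. }
  simpl in *. nra.
Qed.

Lemma continuous_sum_upto n (F : nat -> R -> R) x :
  (forall i, continuous (F i) x) -> continuous (fun y => sum_upto n (fun i => F i y)) x.
Proof.
  intro HF. induction n as [|n IH]; simpl; [apply continuous_const|].
  now apply continuous_Rplus.
Qed.

Lemma RInt_sum_upto n (F : nat -> R -> R) a b : (forall i x, continuous (F i) x) ->
  RInt (fun x => sum_upto n (fun i => F i x)) a b = sum_upto n (fun i => RInt (F i) a b).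
Proof.
  intro HF. induction n as [|n IH]; simpl.
  - rewrite RInt_const. change scal with Rmult. ring.
  - rewrite <- IH. apply RInt_plus_continuous; [|apply HF].
    intro x. now apply continuous_sum_upto.
Qed.

(** * Distance to [2 PI Z] and the tent profile *)

Lemma wrap_bounds x : - PI < wrap x <= PI.
Proof.
  unfold wrap. pose proof PI_RGT_0 as HPI.
  destruct (base_Int_part ((PI - x) / (2 * PI))) as [Hlo Hhi].
  set (y := (PI - x) / (2 * PI)) in *. set (k := IZR (Int_part y)) in *.
  assert (Hy : y * (2 * PI) = PI - x) by (unfold y; field; lra).
  assert (k * (2 * PI) <= y * (2 * PI)) by (apply Rmult_le_compat_r; lra).
  assert ((y - 1) * (2 * PI) < k * (2 * PI)) by (apply Rmult_lt_compat_r; lra).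
  split; nra.
Qed.

Definition circ_dist (x : R) : R := Rabs (wrap x).

Lemma circ_dist_le_shift x (z : Z) : circ_dist x <= Rabs (x + 2 * PI * IZR z).
Proof.
  pose proof (wrap_bounds x) as [Hlo Hhi]. pose proof PI_RGT_0 as HPI.
  set (k := Int_part ((PI - x) / (2 * PI))).
  assert (Hx : x + 2 * PI * IZR z = wrap x + 2 * PI * IZR (z - k)).
  { rewrite minus_IZR. unfold wrap. fold k. ring. }
  unfold circ_dist. rewrite Hx.
  destruct (Z.eq_dec (z - k) 0) as [E|E].
  - rewrite E, Rmult_0_r, Rplus_0_r. lra.
  - destruct (Z_lt_le_dec (z - k) 0) as [L|L].
    + assert (IZR (z - k) <= -1) by (apply IZR_le; lia).
      rewrite (Rabs_left1 (_ + _)) by nra. unfold Rabs; destruct Rcase_abs; nra.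
    + assert (1 <= IZR (z - k)) by (apply IZR_le; lia).
      rewrite (Rabs_right (_ + _)) by nra. unfold Rabs; destruct Rcase_abs; nra.
Qed.

Lemma circ_dist_lipschitz x y : Rabs (circ_dist x - circ_dist y) <= Rabs (x - y).
Proof.
  assert (Hone : forall u v, circ_dist u - circ_dist v <= Rabs (u - v)).
  { intros u v. set (k := Int_part ((PI - v) / (2 * PI))).
    pose proof (circ_dist_le_shift u k) as Hu.
    replace (u + 2 * PI * IZR k) with ((v + 2 * PI * IZR k) + (u - v)) in Hu by ring.
    pose proof (Rabs_triang (v + 2 * PI * IZR k) (u - v)).
    change (circ_dist v) with (Rabs (v + 2 * PI * IZR k)). lra. }
  apply Rabs_le. pose proof (Hone x y). pose proof (Hone y x).
  rewrite Rabs_minus_sym in H0. lra.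
Qed.

Lemma circ_dist_periodic x : circ_dist (x + 2 * PI) = circ_dist x.
Proof.
  set (k := Int_part ((PI - x) / (2 * PI))).
  set (k' := Int_part ((PI - (x + 2 * PI)) / (2 * PI))).
  apply Rle_antisym.
  - pose proof (circ_dist_le_shift (x + 2 * PI) (k - 1)) as H.
    rewrite minus_IZR in H. change (circ_dist x) with (Rabs (x + 2 * PI * IZR k)).
    replace (x + 2 * PI * IZR k) with (x + 2 * PI + 2 * PI * (IZR k - IZR 1)) by (simpl; ring).
    exact H.
  - pose proof (circ_dist_le_shift x (k' + 1)) as H.
    rewrite plus_IZR in H. change (circ_dist (x + 2 * PI)) with
      (Rabs (x + 2 * PI + 2 * PI * IZR k')).
    replace (x + 2 * PI + 2 * PI * IZR k') with (x + 2 * PI * (IZR k' + IZR 1)) by (simpl; ring).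
    exact H.
Qed.

(* [psi_loc] without the case analysis on [wrap], which makes continuity and
   periodicity in the angle visible (see [psi_loc_tent]). *)
Definition tent (a m x : R) : R := Rmax 0 (m - m / a * circ_dist x).

Lemma tent_ge0 a m x : 0 <= tent a m x.
Proof. apply Rmax_l. Qed.

Lemma tent_le a m x : 0 < a -> 0 <= m -> tent a m x <= m.
Proof.
  intros Ha Hm. unfold tent. apply Rmax_lub; [lra|].
  assert (0 <= m / a * circ_dist x).
  { apply Rmult_le_pos; [apply Rdiv_le_0_compat; lra | apply Rabs_pos]. }
  lra.
Qed.

Lemma tent_periodic a m x : tent a m (x + 2 * PI) = tent a m x.
Proof. unfold tent. now rewrite circ_dist_periodic. Qed.

Lemma tent_lipschitz a m x y : Rabs (tent a m x - tent a m y) <= Rabs (m / a) * Rabs (x - y).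
Proof.
  assert (H : Rabs (m / a * circ_dist x - m / a * circ_dist y) <= Rabs (m / a) * Rabs (x - y)).
  { rewrite <- Rmult_minus_distr_l, Rabs_mult.
    apply Rmult_le_compat_l; [apply Rabs_pos | apply circ_dist_lipschitz]. }
  apply Rabs_le_between in H. pose proof (Rabs_pos (m / a)). pose proof (Rabs_pos (x - y)).
  unfold tent, Rmax. apply Rabs_le.
  destruct (Rle_dec 0 (m - m / a * circ_dist x)); destruct (Rle_dec 0 (m - m / a * circ_dist y));
    split; nra.
Qed.

Lemma tent_continuous a m x : continuous (tent a m) x.
Proof.
  apply (lipschitz_continuous _ x (Rabs (m / a))); [apply Rabs_pos|].
  intro y. apply tent_lipschitz.
Qed.

Lemma psi_loc_tent a m ph th : 0 < a -> 0 < m -> psi_loc a m ph th = tent a m (th - ph).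
Proof.
  intros Ha Hm. unfold psi_loc, tent, circ_dist, Rmax. set (d := wrap (th - ph)).
  assert (m / a * a = m) by (field; lra).
  assert (0 < m / a) by (apply Rdiv_lt_0_compat; lra).
  destruct (Rle_dec 0 d).
  - rewrite Rabs_right by lra.
    destruct (Rlt_dec d a); destruct (Rle_dec 0 (m - m / a * d)); nra.
  - rewrite Rabs_left by lra.
    destruct (Rlt_dec (- a) d); destruct (Rle_dec 0 (m - m / a * - d)); nra.
Qed.

Lemma in_C_of_psi_loc_neq0 a m ph th : psi_loc a m ph th <> 0 -> in_C a ph th.
Proof.
  unfold psi_loc, in_C, in_Cplus, in_Cminus. set (d := wrap (th - ph)).
  destruct (Rle_dec 0 d); [destruct (Rlt_dec d a) | destruct (Rlt_dec (- a) d)];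
    intro H; try (exfalso; apply H; reflexivity); lra.
Qed.

(** * The coverage cost *)

Section Coverage.

Variables (n : nat) (alpha psim : nat -> R) (mu : R -> R).
Hypothesis alpha_pos : forall i, (i < n)%nat -> 0 < alpha i.
Hypothesis psim_pos : forall i, (i < n)%nat -> 0 < psim i.
Hypothesis mu_continuous : forall x, continuous mu x.

(* Global intensity at angle [x] when satellite [i] is centred at angle [c i]. *)
Definition coverage (c : nat -> R) (x : R) : R :=
  sum_upto n (fun i => tent (alpha i) (psim i) (x - c i)).

(* The inner integral of [J] once the constellation has rotated by the angle [s = om * tau]. *)
Definition cost (c : nat -> R) (s : R) : R :=
  RInt (fun th => (coverage c (th - s) - mu th) ^ 2) 0 (2 * PI).

Definition beam_energy (i : nat) : R :=
  RInt (fun x => tent (alpha i) (psim i) x ^ 2) 0 (2 * PI).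

Definition demand_corr (i : nat) (s : R) : R :=
  RInt (fun th => mu th * tent (alpha i) (psim i) (th - s)) 0 (2 * PI).

Definition demand_energy : R := RInt (fun th => mu th ^ 2) 0 (2 * PI).

(* [cost c s] with the cross terms [2 psi_i psi_j] dropped from the square
   (see [cost_lower_eq_RInt]). *)
Definition cost_lower (c : nat -> R) (s : R) : R :=
  sum_upto n (fun i => beam_energy i - 2 * demand_corr i (c i + s)) + demand_energy.

Let tent_shift_continuous i s x : continuous (fun y => tent (alpha i) (psim i) (y - s)) x.
Proof. pose proof (tent_continuous (alpha i) (psim i)). continuity. Qed.

Lemma coverage_continuous c x : continuous (coverage c) x.
Proof. apply continuous_sum_upto. intro i. apply tent_shift_continuous. Qed.

Lemma coverage_periodic c x : coverage c (x + 2 * PI) = coverage c x.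
Proof.
  apply sum_upto_ext. intros i _.
  rewrite <- (tent_periodic _ _ (x - c i)).
  now replace (x + 2 * PI - c i) with (x - c i + 2 * PI) by ring.
Qed.

Lemma coverage_lipschitz c x y :
  Rabs (coverage c x - coverage c y) <=
  sum_upto n (fun i => Rabs (psim i / alpha i)) * Rabs (x - y).
Proof.
  unfold coverage. rewrite <- sum_upto_minus, <- sum_upto_mult_r.
  eapply Rle_trans; [apply Rabs_sum_upto|]. apply sum_upto_le. intros i _.
  replace (x - y) with ((x - c i) - (y - c i)) by ring. apply tent_lipschitz.
Qed.

Lemma coverage_bounds c x : 0 <= coverage c x <= sum_upto n psim.
Proof.
  split.
  - apply sum_upto_ge0. intros. apply tent_ge0.
  - apply sum_upto_le. intros i Hi. apply tent_le; [auto | apply Rlt_le; auto].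
Qed.

Lemma cost_continuous c s0 : continuous (cost c) s0.
Proof.
  pose proof PI_RGT_0 as HPI.
  destruct (continuous_bounded_on mu 0 (2 * PI)) as [M HM]; [lra | exact mu_continuous|].
  assert (HM0 : 0 <= M) by (specialize (HM 0 ltac:(lra)); pose proof (Rabs_pos (mu 0)); lra).
  set (K := sum_upto n (fun i => Rabs (psim i / alpha i))).
  assert (HK : 0 <= K) by (apply sum_upto_ge0; intros; apply Rabs_pos).
  set (Ms := sum_upto n psim).
  assert (HMs : 0 <= Ms) by (apply sum_upto_ge0; intros; apply Rlt_le; auto).
  apply (continuous_RInt_param _ 0 (2 * PI) (K * (2 * Ms + 2 * M))); [lra | nra | |].
  - intro s. apply ex_RInt_continuous_everywhere. intro x.
    pose proof (coverage_continuous c). continuity.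
  - intros s th Hth.
    set (S1 := coverage c (th - s)). set (S2 := coverage c (th - s0)).
    replace ((S1 - mu th) ^ 2 - (S2 - mu th) ^ 2) with ((S1 - S2) * (S1 + S2 - 2 * mu th))
      by ring.
    rewrite Rabs_mult.
    assert (HS : Rabs (S1 - S2) <= K * Rabs (s - s0)).
    { eapply Rle_trans; [apply coverage_lipschitz|]. fold K.
      replace (th - s - (th - s0)) with (- (s - s0)) by ring. rewrite Rabs_Ropp. lra. }
    assert (Hsum : Rabs (S1 + S2 - 2 * mu th) <= 2 * Ms + 2 * M).
    { pose proof (coverage_bounds c (th - s)). pose proof (coverage_bounds c (th - s0)).
      pose proof (HM th Hth) as Hmu. apply Rabs_le_between in Hmu.
      fold S1 S2 Ms in H, H0. apply Rabs_le. lra. }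
    replace (K * (2 * Ms + 2 * M) * Rabs (s - s0))
      with (K * Rabs (s - s0) * (2 * Ms + 2 * M)) by ring.
    apply Rmult_le_compat; auto using Rabs_pos.
Qed.

Lemma demand_corr_continuous i s0 : continuous (demand_corr i) s0.
Proof.
  pose proof PI_RGT_0 as HPI.
  destruct (continuous_bounded_on mu 0 (2 * PI)) as [M HM]; [lra | exact mu_continuous|].
  assert (HM0 : 0 <= M) by (specialize (HM 0 ltac:(lra)); pose proof (Rabs_pos (mu 0)); lra).
  apply (continuous_RInt_param _ 0 (2 * PI) (M * Rabs (psim i / alpha i)));
    [lra | apply Rmult_le_pos; [lra | apply Rabs_pos] | |].
  - intro s. apply ex_RInt_continuous_everywhere. intro x.
    pose proof (tent_shift_continuous i s). continuity.
  - intros s th Hth. rewrite <- Rmult_minus_distr_l, Rabs_mult, Rmult_assoc.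
    apply Rmult_le_compat; auto using Rabs_pos.
    eapply Rle_trans; [apply tent_lipschitz|].
    replace (th - s - (th - s0)) with (- (s - s0)) by ring. rewrite Rabs_Ropp. lra.
Qed.

Lemma cost_lower_continuous c s0 : continuous (cost_lower c) s0.
Proof.
  apply continuous_Rplus; [|apply continuous_const].
  apply continuous_sum_upto. intro i. pose proof (demand_corr_continuous i). continuity.
Qed.

Lemma demand_corr_periodic i s : demand_corr i (s + 2 * PI) = demand_corr i s.
Proof.
  apply RInt_ext. intros x _.
  rewrite <- (tent_periodic _ _ (x - (s + 2 * PI))).
  now replace (x - (s + 2 * PI) + 2 * PI) with (x - s) by ring.
Qed.

Lemma cost_lower_eq_RInt c s :
  cost_lower c s =
  RInt (fun th => sum_upto n (fun i => tent (alpha i) (psim i) (th - s - c i) ^ 2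
                                      - 2 * (mu th * tent (alpha i) (psim i) (th - s - c i)))
                  + mu th ^ 2) 0 (2 * PI).
Proof.
  assert (Hg : forall i y, continuous (tent (alpha i) (psim i)) y)
    by (intros; apply tent_continuous).
  assert (Hterm : forall i th, continuous (fun y => tent (alpha i) (psim i) (y - s - c i)) th)
    by (intros i th; pose proof (Hg i); continuity).
  rewrite RInt_plus_continuous, RInt_sum_upto.
  - unfold cost_lower, demand_energy. f_equal. apply sum_upto_ext. intros i _.
    rewrite RInt_minus_scal_continuous by (intro; pose proof (Hterm i); continuity).
    f_equal.
    + assert (Hsq : forall x, continuous (fun y : R => tent (alpha i) (psim i) y ^ 2) x)
        by (intro; apply continuous_pow, Hg).
      assert (Hsq_per : forall x, tent (alpha i) (psim i) (x + 2 * PI) ^ 2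
                                  = tent (alpha i) (psim i) x ^ 2)
        by (intro; now rewrite tent_periodic).
      unfold beam_energy. rewrite <- (RInt_periodic_shift _ _ Hsq Hsq_per (- (s + c i))).
      apply RInt_ext. intros x _. now replace (x + - (s + c i)) with (x - s - c i) by ring.
    + unfold demand_corr. apply f_equal, RInt_ext. intros x _.
      now replace (x - (c i + s)) with (x - s - c i) by ring.
  - intros i th. pose proof (Hterm i). continuity.
  - intro th. apply continuous_sum_upto. intro i. pose proof (Hterm i). continuity.
  - intro th. continuity.
Qed.

Lemma cost_lower_integrand_gap c x m :
  sum_upto n (fun i => tent (alpha i) (psim i) (x - c i) ^ 2
                       - 2 * (m * tent (alpha i) (psim i) (x - c i))) + m ^ 2
  = (coverage c x - m) ^ 2
    - (coverage c x ^ 2 - sum_upto n (fun i => tent (alpha i) (psim i) (x - c i) ^ 2)).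
Proof.
  rewrite sum_upto_minus, sum_upto_mult_l, sum_upto_mult_l. unfold coverage. ring.
Qed.

Let cost_integrand_continuous c s th :
  continuous (fun th => (coverage c (th - s) - mu th) ^ 2) th.
Proof. pose proof (coverage_continuous c). continuity. Qed.

Let lower_integrand_continuous c s th :
  continuous (fun th => sum_upto n (fun i => tent (alpha i) (psim i) (th - s - c i) ^ 2
                          - 2 * (mu th * tent (alpha i) (psim i) (th - s - c i)))
                        + mu th ^ 2) th.
Proof.
  apply continuous_Rplus; [|continuity].
  apply continuous_sum_upto. intro i. pose proof (tent_continuous (alpha i) (psim i)).
  continuity.
Qed.

Lemma cost_lower_le_cost c s : cost_lower c s <= cost c s.
Proof.
  pose proof PI_RGT_0.
  rewrite cost_lower_eq_RInt. unfold cost.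
  apply RInt_le; [lra | apply ex_RInt_continuous_everywhere, lower_integrand_continuous
                       | apply ex_RInt_continuous_everywhere, cost_integrand_continuous |].
  intros th _. rewrite (cost_lower_integrand_gap c (th - s)).
  enough (sum_upto n (fun i => tent (alpha i) (psim i) (th - s - c i) ^ 2)
          <= coverage c (th - s) ^ 2) by lra.
  apply sum_upto_sqr_le. intros. apply tent_ge0.
Qed.

Lemma cost_lower_eq_cost c s :
  (forall i j, (i < n)%nat -> (j < n)%nat -> i <> j -> forall x,
     tent (alpha i) (psim i) (x - c i) * tent (alpha j) (psim j) (x - c j) = 0) ->
  cost_lower c s = cost c s.
Proof.
  intro Hdisjoint. rewrite cost_lower_eq_RInt. unfold cost.
  apply RInt_ext. intros th _.
  match goal with |- ?lhs = ?rhs => change (@eq R lhs rhs) end.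
  rewrite (cost_lower_integrand_gap c (th - s)).
  rewrite (sum_upto_sqr_orthogonal n (fun i => tent (alpha i) (psim i) (th - s - c i))).
  - unfold coverage. ring.
  - intros i j Hi Hj Hij. now apply Hdisjoint.
Qed.

Lemma RInt_cost_lower c :
  RInt (cost_lower c) 0 (2 * PI) =
  sum_upto n (fun i => 2 * PI * beam_energy i - 2 * RInt (demand_corr i) 0 (2 * PI))
  + 2 * PI * demand_energy.
Proof.
  assert (Hcorr : forall i x, continuous (demand_corr i) x) by apply demand_corr_continuous.
  unfold cost_lower.
  rewrite RInt_plus_continuous, RInt_sum_upto, RInt_const.
  - change scal with Rmult. rewrite Rminus_0_r. apply (f_equal (fun t => t + _)).
    apply sum_upto_ext. intros i _.
    rewrite RInt_minus_scal_continuous, RInt_const;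
      [| intro; continuity | intro; pose proof (Hcorr i); continuity].
    change scal with Rmult. rewrite Rminus_0_r.
    rewrite (RInt_ext _ (fun s => demand_corr i (s + c i))) by (intros; now rewrite Rplus_comm).
    now rewrite (RInt_periodic_shift _ _ (Hcorr i) (demand_corr_periodic i) (c i)).
  - intros i x. pose proof (Hcorr i). continuity.
  - intro x. apply continuous_sum_upto. intro i. pose proof (Hcorr i). continuity.
  - intro x. continuity.
Qed.

End Coverage.

(** * The potential [J] *)

Definition centres (rs : R) (phi0 : nat -> R) (q : nat -> R * R) (i : nat) : R :=
  phi0 i + dphi rs (q i).

Lemma Jpot_eq_RInt_cost n rs om phi0 alpha psim mu q :
  0 < om -> (forall i, (i < n)%nat -> 0 < alpha i) -> (forall i, (i < n)%nat -> 0 < psim i) ->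
  (forall x, continuous mu x) -> (forall x, mu (x + 2 * PI) = mu x) ->
  Jpot n rs om phi0 alpha psim mu q
  = / (4 * PI) * RInt (cost n alpha psim mu (centres rs phi0 q)) 0 (2 * PI).
Proof.
  intros Hom Halpha Hpsim Hmu Hmu_per. pose proof PI_RGT_0.
  set (c := centres rs phi0 q).
  assert (Hinner : forall tau,
    RInt (fun th => (rho n rs om phi0 alpha psim q th tau - mu th) ^ 2)
         (om * tau) (om * tau + 2 * PI)
    = cost n alpha psim mu c (om * tau)).
  { intro tau. unfold cost.
    set (f := fun th : R => (coverage n alpha psim c (th - om * tau) - mu th) ^ 2).
    assert (Hf : forall th, continuous f th)
      by (intro; pose proof (coverage_continuous n alpha psim c); unfold f; continuity).
    assert (Hf_per : forall th, f (th + 2 * PI) = f th).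
    { intro th. unfold f. rewrite Hmu_per, <- (coverage_periodic n alpha psim c (th - om * tau)).
      now replace (th + 2 * PI - om * tau) with (th - om * tau + 2 * PI) by ring. }
    rewrite <- (RInt_periodic f _ Hf Hf_per (om * tau)).
    apply RInt_ext. intros th _. unfold f. do 3 f_equal.
    unfold rho, coverage. apply sum_upto_ext. intros i Hi.
    rewrite psi_loc_tent by auto. unfold phi, c, centres. f_equal. ring. }
  unfold Jpot. cbv zeta.
  rewrite (RInt_ext _ (fun tau => cost n alpha psim mu c (om * tau))) by (intros; apply Hinner).
  rewrite RInt_comp_scale by (auto using cost_continuous).
  field. lra.
Qed.

Lemma tent_overlap_free_of_nonoverlap n rs om phi0 alpha psim p :
  (forall i, (i < n)%nat -> 0 < alpha i) -> (forall i, (i < n)%nat -> 0 < psim i) ->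
  (forall i j, (i < n)%nat -> (j < n)%nat -> i <> j -> forall tau th,
     ~ (in_C (alpha i) (phi rs om (phi0 i) (p i) tau) th /\
        in_C (alpha j) (phi rs om (phi0 j) (p j) tau) th)) ->
  forall i j, (i < n)%nat -> (j < n)%nat -> i <> j -> forall x,
    tent (alpha i) (psim i) (x - centres rs phi0 p i)
    * tent (alpha j) (psim j) (x - centres rs phi0 p j) = 0.
Proof.
  intros Halpha Hpsim Hnonoverlap i j Hi Hj Hij x.
  assert (Hcover : forall k, (k < n)%nat ->
            tent (alpha k) (psim k) (x - centres rs phi0 p k) <> 0 ->
            in_C (alpha k) (phi rs om (phi0 k) (p k) 0) x).
  { intros k Hk Hnz. apply (in_C_of_psi_loc_neq0 _ (psim k)).
    rewrite psi_loc_tent by auto. unfold phi, centres in *.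
    now rewrite Rmult_0_r, Rplus_0_r. }
  destruct (Req_dec (tent (alpha i) (psim i) (x - centres rs phi0 p i)) 0) as [E|Ei];
    [rewrite E; ring|].
  destruct (Req_dec (tent (alpha j) (psim j) (x - centres rs phi0 p j)) 0) as [E|Ej];
    [rewrite E; ring|].
  exfalso. apply (Hnonoverlap i j Hi Hj Hij 0 x). split; auto.
Qed.

Theorem proposition6
  (n : nat) (rs om pm : R) (phi0 alpha psim : nat -> R) (mu : R -> R)
  (Hn : (3 <= n)%nat) (Hrs : 0 < rs) (Hom : 0 < om) (Hpm : 0 < pm < rs)
  (Hphi0_0 : phi0 0%nat = 0)
  (Hphi0_inc : forall i, (S i < n)%nat -> phi0 i < phi0 (S i))
  (Hphi0_last : phi0 (pred n) < 2 * PI)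
  (Halpha : forall i, (i < n)%nat -> 0 < alpha i < PI)
  (Hpsim : forall i, (i < n)%nat -> 0 < psim i)
  (Hmu_cont : forall x, continuous mu x)
  (Hmu_nonneg : forall x, 0 <= mu x)
  (Hmu_per : forall x, mu (x + 2 * PI) = mu x)
  (s : nat -> R) (pk : nat -> nat -> R * R) (pstar : nat -> R * R)
  (Hiter : forall k i, (i < n)%nat ->
     is_proj_Omega rs pm
       (fst (pk k i) - s k * dJ_x (Jpot n rs om phi0 alpha psim mu) (pk k) i,
        snd (pk k i) - s k * dJ_y (Jpot n rs om phi0 alpha psim mu) (pk k) i)
       (pk (S k) i))
  (Hlim : forall i, (i < n)%nat ->
     is_lim_seq (fun k => fst (pk k i)) (fst (pstar i)) /\
     is_lim_seq (fun k => snd (pk k i)) (snd (pstar i)))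
  (Hint : forall i, (i < n)%nat -> in_int_Omega rs pm (pstar i))
  (Hstat : forall i, (i < n)%nat ->
     is_derive (fun t => Jpot n rs om phi0 alpha psim mu
                           (upd pstar i (t, snd (pstar i)))) (fst (pstar i)) 0 /\
     is_derive (fun t => Jpot n rs om phi0 alpha psim mu
                           (upd pstar i (fst (pstar i), t))) (snd (pstar i)) 0)
  (Hnonoverlap : forall i j, (i < n)%nat -> (j < n)%nat -> i <> j ->
     forall tau th,
       ~ (in_C (alpha i) (phi rs om (phi0 i) (pstar i) tau) th /\
          in_C (alpha j) (phi rs om (phi0 j) (pstar j) tau) th)) :
  exists eps, 0 < eps /\
    forall q : nat -> R * R,
      (forall i, (i < n)%nat -> in_Omega rs pm (q i)) ->
      (forall i, (i < n)%nat ->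
         norm2 (fst (q i) - fst (pstar i), snd (q i) - snd (pstar i)) < eps) ->
      Jpot n rs om phi0 alpha psim mu pstar <= Jpot n rs om phi0 alpha psim mu q.
Proof.
  assert (Halpha_pos : forall i, (i < n)%nat -> 0 < alpha i) by (intros i Hi; apply Halpha, Hi).
  pose proof PI_RGT_0.
  set (cstar := centres rs phi0 pstar).
  (* Any radius works: the inequality below holds for every admissible [q]. *)
  exists 1. split; [lra|]. intros q _ _.
  rewrite !Jpot_eq_RInt_cost by auto.
  apply Rmult_le_compat_l; [left; apply Rinv_0_lt_compat; lra|].
  rewrite (RInt_ext _ (cost_lower n alpha psim mu cstar)).
  2:{ intros x _. symmetry. apply cost_lower_eq_cost; auto.
      now apply (tent_overlap_free_of_nonoverlap n rs om). }
  rewrite RInt_cost_lower by exact Hmu_cont.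
  rewrite <- (RInt_cost_lower n alpha psim mu Hmu_cont (centres rs phi0 q)).
  apply RInt_le; [lra | apply ex_RInt_continuous_everywhere .. | intros x _].
  - now apply cost_lower_continuous.
  - now apply cost_continuous.
  - now apply cost_lower_le_cost.
Qed.
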